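(* Let $M\in\mathcal{D}_2$. Then the set $E_M\coloneqq\{z\in M:\ \operatorname{card}(\operatorname{Tan}(M,z)\cap S^1)=1\}$ is discrete.
   Context: A function on an open convex set $C\subset\mathbb{R}^d$ is DC if it is the difference of two convex functions on $C$. $\mathcal{D}_2$ denotes the family consisting of $\varnothing$ together with all nonempty closed sets $A\subset\mathbb{R}^2$ whose distance function $d_A=\operatorname{dist}(\cdot,A)$ is DC on $\mathbb{R}^2$. $S^1$ is the unit circle in $\mathbb{R}^2$. The tangent cone $\operatorname{Tan}(A,a)$ consists of all $u$ such that $u=\lim_{i\to\infty}r_i(a_i-a)$ for some $r_i>0$ and $a_i\in A$ with $a_i\to a$. A set $D\subset\mathbb{R}^2$ is discrete if each point of $\mathbb{R}^2$ has a neighbourhood containing at most one point of $D$. *)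

(* points of R^2 are pairs (R * R) over R : realType,
   with the Euclidean norm defined explicitly (MathComp's product norm is the max norm,
   but it induces the same topology, which is all we use from it). *)
From HB Require Import structures.
From mathcomp Require Import all_boot all_order all_algebra.
From mathcomp Require Import all_classical all_reals all_analysis.
Set Implicit Arguments. Unset Strict Implicit. Unset Printing Implicit Defensive.
Import Order.TTheory GRing.Theory Num.Theory.
Import numFieldNormedType.Exports.
Local Open Scope classical_set_scope.
Local Open Scope ring_scope.

Section Defs.
Variable R : realType.
Definition pt := (R * R)%type.

Definition enorm (p : pt) : R := Num.sqrt (p.1 ^+ 2 + p.2 ^+ 2).

Definition distA (A : set pt) (x : pt) : R :=
  inf [set enorm (x.1 - a.1, x.2 - a.2) | a in A].

Definition convex_fun (f : pt -> R) : Prop :=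
  forall (x y : pt) (t : R), 0 <= t -> t <= 1 ->
    f (t * x.1 + (1 - t) * y.1, t * x.2 + (1 - t) * y.2)
      <= t * f x + (1 - t) * f y.

Definition DC (f : pt -> R) : Prop :=
  exists g h : pt -> R, convex_fun g /\ convex_fun h /\ forall x, f x = g x - h x.

Definition D2 (A : set pt) : Prop :=
  A = set0 \/ (A !=set0 /\ closed A /\ DC (distA A)).

Definition Tan (A : set pt) (a : pt) : set pt :=
  [set u | exists (r : nat -> R) (s : nat -> pt),
      (forall i, 0 < r i) /\ (forall i, A (s i)) /\
      s @ \oo --> a /\
      (fun i => (r i * ((s i).1 - a.1), r i * ((s i).2 - a.2))) @ \oo --> u].

Definition S1 : set pt := [set u | u.1 ^+ 2 + u.2 ^+ 2 = 1].

Definition discrete_set (D : set pt) : Prop :=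
  forall p : pt, exists U, nbhs p U /\
    forall x y, U x -> U y -> D x -> D y -> x = y.

Definition E_set (M : set pt) : set pt :=
  [set z | M z /\ exists u : pt, Tan M z `&` S1 = [set u]].
End Defs.

(* Write d_M = g - h with g, h convex.  At a point z of E_M with unit tangent u
   the tangent cone is the ray R_+ u, so d_M grows at least like t <q, w> - o(t)
   along z + t w whenever |q| <= 1 and <q, u> <= 0; hence c + q is a subgradient
   of g at z for every subgradient c of h at z.  For distinct x, y in E_M take
   q = s/8 - u/2 with s the sign vector of y - x: monotonicity of the
   subdifferential of g then forces e(x) = c(x) - u(x)/2 and e(y) to be at
   max-distance at least 1/4.  Since subgradients of h are locally bounded, e is
   locally bounded on E_M, and Bolzano-Weierstrass rules out an accumulation
   point of E_M. *)
From mathcomp Require Import all_boot all_order all_algebra.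
From mathcomp Require Import all_classical all_reals all_analysis.
From mathcomp Require Import ring lra.
Set Implicit Arguments. Unset Strict Implicit. Unset Printing Implicit Defensive.
Import Order.TTheory GRing.Theory Num.Theory.
Import numFieldNormedType.Exports.
Local Open Scope classical_set_scope.
Local Open Scope ring_scope.

Section Plane.
Variable R : realType.
Local Notation pt := (pt R).
Local Notation S1 := (@S1 R).
Implicit Types (M : set pt) (p q u w x y z : pt).

Definition dotp p q : R := p.1 * q.1 + p.2 * q.2.

Lemma ptP p q : p.1 = q.1 -> p.2 = q.2 -> p = q.
Proof. by case: p q => [? ?] [? ?] /= -> ->. Qed.

Lemma ptE_add p q : p + q = (p.1 + q.1, p.2 + q.2). Proof. by []. Qed.
Lemma ptE_opp p : - p = (- p.1, - p.2). Proof. by []. Qed.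
Lemma ptE_scale k p : k *: p = (k * p.1, k * p.2). Proof. by []. Qed.
Definition ptE := (ptE_add, ptE_opp, ptE_scale).

Lemma dotpC p q : dotp p q = dotp q p.
Proof. by rewrite /dotp mulrC [p.2 * _]mulrC. Qed.

Lemma dotpDr p q w : dotp p (q + w) = dotp p q + dotp p w.
Proof. by rewrite /dotp !ptE /=; ring. Qed.

Lemma dotpBr p q w : dotp p (q - w) = dotp p q - dotp p w.
Proof. by rewrite /dotp !ptE /=; ring. Qed.

Lemma dotpZr k p q : dotp p (k *: q) = k * dotp p q.
Proof. by rewrite /dotp !ptE /=; ring. Qed.

Lemma dotp_le_norm p q : dotp p q <= `|p| * (`|q.1| + `|q.2|).
Proof.
rewrite /dotp mulrDr; apply: lerD; apply: le_trans (ler_norm _) _;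
  by rewrite normrM ler_wpM2r // prod_normE le_max lexx ?orbT.
Qed.

Lemma dotp_cvg (s : nat -> pt) q l :
  s @ \oo --> l -> (fun n => dotp q (s n)) @ \oo --> dotp q l.
Proof.
move=> sl; apply: cvgD; apply: cvgM (cvg_cst _) _; apply: cvg_comp sl _.
  exact: cvg_fst.
exact: cvg_snd.
Qed.

Lemma sqr_enorm p : enorm p ^+ 2 = dotp p p.
Proof. by rewrite sqr_sqrtr ?addr_ge0 ?sqr_ge0 // /dotp !expr2. Qed.

Lemma enorm_ge0 p : 0 <= enorm p.
Proof. exact: sqrtr_ge0. Qed.

Lemma enorm_eq0 p : (enorm p == 0) = (p == 0).
Proof.
rewrite sqrtr_eq0 le_eqVlt ltNge addr_ge0 ?sqr_ge0 // orbF paddr_eq0 ?sqr_ge0 //.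
by rewrite !sqrf_eq0; case: p.
Qed.

Lemma enormZ k p : enorm (k *: p) = `|k| * enorm p.
Proof.
by rewrite /enorm /= !exprMn -mulrDr sqrtrM ?sqr_ge0 // sqrtr_sqr.
Qed.

Lemma normr_le_enorm p : `|p| <= enorm p.
Proof.
rewrite prod_normE ge_max -!sqrtr_sqr !ler_sqrt ?addr_ge0 ?sqr_ge0 //.
by rewrite lerDl lerDr !sqr_ge0.
Qed.

Lemma dotp_le_enorm p q : dotp p q <= enorm p * enorm q.
Proof.
rewrite -sqrtrM ?addr_ge0 ?sqr_ge0 //; apply: le_trans (ler_norm _) _.
rewrite -sqrtr_sqr ler_sqrt ?mulr_ge0 ?addr_ge0 ?sqr_ge0 // /dotp.
by have := sqr_ge0 (p.1 * q.2 - p.2 * q.1); nra.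
Qed.

Lemma S1E u : S1 u <-> enorm u = 1.
Proof.
rewrite /S1 /enorm /=; split=> [->|u1]; first exact: sqrtr1.
by rewrite -[LHS]sqr_sqrtr ?addr_ge0 ?sqr_ge0 // u1 expr1n.
Qed.

Lemma distA_le M x m : M m -> distA M x <= enorm (x - m).
Proof.
move=> Mm; apply: ge_inf; last by exists m.
by exists 0 => _ [a _ <-]; exact: enorm_ge0.
Qed.

Lemma distA_eq0 M z : M z -> distA M z = 0.
Proof.
move=> Mz; apply/eqP; rewrite eq_le.
rewrite (le_trans (distA_le z Mz)) /=; last by rewrite subrr /enorm /= expr0n addr0 sqrtr0.
apply: lb_le_inf; first by exists (enorm (z - z)), z.
by move=> _ [a _ <-]; exact: enorm_ge0.
Qed.

Lemma distA_ltP M x c : M !=set0 -> distA M x < c ->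
  exists2 m, M m & enorm (x - m) < c.
Proof.
move=> [m0 Mm0] /inf_lt[]; first by exists (enorm (x - m0)), m0.
by move=> _ [m Mm <-]; exists m.
Qed.

Lemma TanZ M z l k : 0 < k -> Tan M z l -> Tan M z (k *: l).
Proof.
move=> k0 [r [s [r0 [Ms [sz rl]]]]].
exists (fun i => k * r i), s; split; first by move=> i; exact: mulr_gt0.
do 2!split => //.
have -> : (fun i => (k * r i) *: (s i - z)) = (fun i => k *: (r i *: (s i - z))).
  by apply/funext => i; rewrite scalerA.
exact: cvgZ (cvg_cst _) rl.
Qed.

Lemma Tan_lim M z (r : nat -> R) (s : nat -> pt) l :
  (forall i, 0 < r i) -> (fun i => (r i)^-1) @ \oo --> 0 -> (forall i, M (s i)) ->
  (fun i => r i *: (s i - z)) @ \oo --> l -> Tan M z l.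
Proof.
move=> r0 r_oo Ms rl; exists r, s; do 3!split => //.
have -> : s = (fun i => z + (r i)^-1 *: (r i *: (s i - z))).
  apply/funext => i; rewrite scalerA mulVf ?gt_eqF // scale1r.
  by rewrite addrC subrK.
rewrite -[X in _ --> X]addr0 -(scale0r l).
exact: cvgD (cvg_cst _) (cvgZ r_oo rl).
Qed.

Lemma Tan_ray M z u l : Tan M z `&` S1 = [set u] -> Tan M z l -> l = enorm l *: u.
Proof.
move=> TanS1 Tl; have [l0|l0] := eqVneq (enorm l) 0.
  by rewrite l0 scale0r; apply/eqP; rewrite -enorm_eq0 l0.
have n0 : 0 < enorm l by rewrite lt_def l0 enorm_ge0.
have : (Tan M z `&` S1) ((enorm l)^-1 *: l).
  split; first by apply: TanZ; rewrite ?invr_gt0.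
  by apply/S1E; rewrite enormZ ger0_norm ?invr_ge0 ?enorm_ge0 // mulVf.
by rewrite TanS1 => <-; rewrite scalerA mulfV // scale1r.
Qed.

Lemma cvg_subseq (T : topologicalType) (s : nat -> T) (l : T) (f : nat -> nat) :
  increasing_seq f -> s @ \oo --> l -> (s \o f) @ \oo --> l.
Proof.
move=> /increasing_seqP f_incr sl; apply: cvg_comp sl.
move=> P [N _ NP]; exists N => // n /= Nn; apply: NP => /=.
have f_ge n' : (n' <= f n')%N by elim: n' => // n' IH; exact: leq_ltn_trans IH (f_incr n').
exact: leq_trans Nn (f_ge n).
Qed.

Lemma bounded_fun_le (s : nat -> R) B : (forall n, `|s n| <= B) -> bounded_fun s.
Proof.
move=> sB; rewrite /bounded_fun /bounded_near; near=> K => n _; apply: le_trans (sB n) _.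
by near: K; apply: nbhs_pinfty_ge; rewrite num_real.
Unshelve. all: end_near. Qed.

Lemma bolzano_weierstrass_pt (s : nat -> pt) B : (forall n, `|s n| <= B) ->
  exists f, exists2 l : pt, increasing_seq f & (s \o f) @ \oo --> l.
Proof.
move=> sB; have sB' n : `|(s n).1| <= B /\ `|(s n).2| <= B.
  by have := sB n; rewrite prod_normE ge_max => /andP[].
have [f1 f1_incr /cvg_ex[l1 s1l]] := bolzano_weierstrass
  (bounded_fun_le (fun n => (sB' n).1)).
have [f2 f2_incr /cvg_ex[l2 s2l]] := bolzano_weierstrass
  (bounded_fun_le (fun n => (sB' (f1 n)).2)).
exists (f1 \o f2), (l1, l2); first by move=> m n /=; rewrite f1_incr; exact: f2_incr.
have -> : s \o (f1 \o f2) = (fun n => ((s (f1 (f2 n))).1, (s (f1 (f2 n))).2)).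
  by apply/funext => n /=; case: (s _).
exact: cvg_pair (cvg_subseq f2_incr s1l) s2l.
Qed.

Lemma distA_tangent_lower M z u q w eps :
  M z -> Tan M z `&` S1 = [set u] -> enorm q <= 1 -> dotp q u <= 0 -> 0 < eps ->
  exists2 t, 0 < t <= 1 & t * (dotp q w - eps) <= distA M (z + t *: w).
Proof.
move=> Mz TanS1 q1 qu eps0; apply: contrapT => no_t.
(* Otherwise rescaled near-minimizers at scales 1/(k+1) accumulate at a tangent
   vector l with <q, w - l> <= <q, w> - eps, whereas <q, l> <= 0. *)
set c := dotp q w - eps.
have near_pts k : exists m, M m /\ enorm (z + k.+1%:R^-1 *: w - m) < k.+1%:R^-1 * c.
  have : distA M (z + k.+1%:R^-1 *: w) < k.+1%:R^-1 * c.
    rewrite ltNge; apply/negP => le_c; apply: no_t.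
    by exists k.+1%:R^-1; rewrite // invr_gt0 ltr0n invf_le1 ?ler1n ?ltr0n.
  by case/(distA_ltP (ex_intro _ z Mz)) => m; exists m.
have [m /all_and2[Mm m_close]] := choice near_pts.
pose v k := k.+1%:R *: (m k - z).
have v_close k : enorm (w - v k) < c.
  have -> : w - v k = k.+1%:R *: (z + k.+1%:R^-1 *: w - m k).
    rewrite scalerBr scalerDr scalerA mulfV ?pnatr_eq0 // scale1r /v scalerBr.
    by rewrite opprB addrAC addrC.
  rewrite enormZ ger0_norm // -[c](@mulVKf _ k.+1%:R) ?pnatr_eq0 //.
  by rewrite ltr_pM2l ?ltr0n.
have v_bounded k : `|v k| <= `|w| + c.
  rewrite -[v k]opprK -[- v k](addKr w) opprD opprK.
  apply: le_trans (ler_normB _ _) _; rewrite lerD2l.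
  exact: le_trans (normr_le_enorm _) (ltW (v_close k)).
have [f [l f_incr vl]] := bolzano_weierstrass_pt v_bounded.
have Tl : Tan M z l.
  apply: (@Tan_lim _ _ (fun i => (f i).+1%:R) (m \o f)) => //.
  - exact: cvg_subseq f_incr (@cvg_harmonic R).
  - by move=> i; exact: Mm.
have ql : dotp q l <= 0.
  by rewrite (Tan_ray TanS1 Tl) dotpZr mulr_ge0_le0 ?enorm_ge0.
have : dotp q (w - l) <= c.
  apply: (ler_cvg_to (dotp_cvg (q := q) (cvgB (cvg_cst w) vl)) (cvg_cst c)).
  apply: nearW => i /=; apply: le_trans (dotp_le_enorm _ _) _.
  exact: le_trans (ler_piMl (enorm_ge0 _) q1) (ltW (v_close (f i))).
by rewrite dotpBr /c; lra.
Qed.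

Definition subgradient (f : pt -> R) z c := forall w, dotp c w <= f (z + w) - f z.

Lemma convex_funE (f : pt -> R) : convex_fun f <->
  forall x y t, 0 <= t -> t <= 1 -> f (t *: x + (1 - t) *: y) <= t * f x + (1 - t) * f y.
Proof. by []. Qed.

Lemma convex_fun_affine (f : pt -> R) (A : pt -> pt) c k : convex_fun f ->
  (forall x y t, A (t *: x + (1 - t) *: y) = t *: A x + (1 - t) *: A y) ->
  convex_fun (fun p => f (A p) - dotp c p - k).
Proof.
move=> /convex_funE f_conv A_aff; apply/convex_funE => x y t t0 t1.
rewrite A_aff dotpDr !dotpZr.
by have := f_conv (A x) (A y) t t0 t1; lra.
Qed.

Lemma convex_le_comb (f : pt -> R) x y t U : convex_fun f -> 0 <= t <= 1 ->
  f x <= U -> f y <= U -> f (t *: x + (1 - t) *: y) <= U.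
Proof.
move=> /convex_funE f_conv /andP[t0 t1] fx fy.
apply: le_trans (f_conv x y t t0 t1) _.
have t1' : 0 <= 1 - t by rewrite subr_ge0.
by have := ler_wpM2l t0 fx; have := ler_wpM2l t1' fy; lra.
Qed.

Lemma convex_linear_minorant (G : pt -> R) e : convex_fun G -> e != 0 ->
  (forall p, dotp e p = 0 -> 0 <= G p) -> exists b, forall p, b * dotp e p <= G p.
Proof.
move=> /convex_funE G_conv e0 G0.
have ee : 0 < dotp e e by rewrite -sqr_enorm exprn_gt0 // lt_def enorm_eq0 e0 enorm_ge0.
have slope_le p1 p2 : dotp e p1 < 0 -> 0 < dotp e p2 ->
    G p1 / dotp e p1 <= G p2 / dotp e p2.
  move=> y1 y2; set l := dotp e p2 / (dotp e p2 - dotp e p1).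
  have d0 : dotp e p2 - dotp e p1 != 0 by rewrite gt_eqF // subr_gt0 (lt_trans y1).
  have l0 : 0 <= l by rewrite divr_ge0 ?ltW // subr_gt0 (lt_trans y1).
  have l1 : l <= 1 by rewrite ler_pdivrMr ?subr_gt0 ?(lt_trans y1) // mul1r; lra.
  have : 0 <= G (l *: p1 + (1 - l) *: p2).
    by apply: G0; rewrite dotpDr !dotpZr /l; field.
  move/le_trans/(_ (G_conv p1 p2 l l0 l1)) => comb_ge0.
  have key : 0 <= dotp e p2 * G p1 - dotp e p1 * G p2.
    have -> : dotp e p2 * G p1 - dotp e p1 * G p2 =
              (dotp e p2 - dotp e p1) * (l * G p1 + (1 - l) * G p2) by rewrite /l; field.
    by rewrite mulr_ge0 // subr_ge0 ltW // (lt_trans y1).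
  have e1 : G p1 = dotp e p1 * (G p1 / dotp e p1) by rewrite mulrC divfK ?lt_eqF.
  have e2 : G p2 = dotp e p2 * (G p2 / dotp e p2) by rewrite mulrC divfK ?gt_eqF.
  have y12 : dotp e p1 * dotp e p2 < 0 by rewrite nmulr_rlt0.
  move: e1 e2 key; set a := G p1 / _; set b := G p2 / _ => e1 e2.
  rewrite [G p1]e1 [G p2]e2; nra.
pose A := [set G p / dotp e p | p in [set p | dotp e p < 0]].
have Ane : A !=set0.
  by exists (G (- e) / dotp e (- e)), (- e) => //=; rewrite -scaleN1r dotpZr mulN1r oppr_lt0.
have A_le p : 0 < dotp e p -> ubound A (G p / dotp e p).
  by move=> yp _ [p1 y1 <-]; exact: slope_le.
exists (sup A) => p; have [y|y|y] := ltgtP (dotp e p) 0.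
- have : G p / dotp e p <= sup A by apply: ub_le_sup; [exists (G e / dotp e e); exact: A_le|exists p].
  rewrite ler_ndivrMr //; lra.
- have : sup A <= G p / dotp e p by exact: ge_sup (A_le p y).
  by rewrite ler_pdivlMr.
- by rewrite y mulr0; exact: G0.
Qed.

Lemma convex_subgradient f z : convex_fun f -> exists c, subgradient f z c.
Proof.
move=> f_conv.
have [a a_le] : exists a, forall p,
    a * dotp (1, 0) p <= f (z + (p.1, 0)) - dotp 0 p - f z.
  apply: convex_linear_minorant.
  - apply: convex_fun_affine => // x y t.
    by apply: ptP; rewrite !ptE /=; ring.
  - by rewrite xpair_eqE oner_eq0.
  - move=> p; rewrite /dotp /= mul1r !mul0r !addr0 => ->.
    by rewrite addr0 subr0 subrr.
have [b b_le] : exists b, forall p,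
    b * dotp (0, 1) p <= f (z + p) - dotp (a, 0) p - f z.
  apply: convex_linear_minorant.
  - apply: convex_fun_affine => // x y t.
    by apply: ptP; rewrite !ptE /=; ring.
  - by rewrite xpair_eqE oner_eq0 andbF.
  - move=> p; rewrite /dotp /= mul1r mul0r add0r => p2.
    have := a_le p; rewrite /dotp /= mul1r !mul0r !addr0 subr0.
    have -> : (p.1, 0) = p by apply: ptP; rewrite ?p2.
    lra.
exists (a, b) => w; have := b_le w.
by rewrite /dotp /= !mul1r !mul0r addr0 add0r; lra.
Qed.

Lemma segment_comb (a b x : R) : a < b -> a <= x <= b ->
  exists2 t, 0 <= t <= 1 & x = t * a + (1 - t) * b.
Proof.
move=> ab /andP[ax xb]; have ba : b - a != 0 by rewrite subr_eq0 gt_eqF.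
exists ((b - x) / (b - a)); last by field.
by rewrite divr_ge0 ?subr_ge0 ?(ltW ab) //= ler_pdivrMr ?subr_gt0 // mul1r lerD2l lerN2.
Qed.

Lemma convex_bounded_above_box f p r : convex_fun f -> 0 < r ->
  exists U, forall x, `|x - p| <= r -> f x <= U.
Proof.
move=> f_conv r0; pose corner s1 s2 : pt := (p.1 + s1 * r, p.2 + s2 * r).
exists (Num.max (Num.max (f (corner (-1) (-1))) (f (corner 1 (-1))))
                (Num.max (f (corner (-1) 1)) (f (corner 1 1)))) => x.
set U := Num.max _ _; case: x => x1 x2.
rewrite prod_normE ge_max !ler_norml /= => /andP[/andP[lx1 ux1] /andP[lx2 ux2]].
have [t t01 ->] : exists2 t, 0 <= t <= 1 & x1 = t * (p.1 - r) + (1 - t) * (p.1 + r).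
  by apply: segment_comb; [lra | apply/andP; split; lra].
have [s s01 ->] : exists2 s, 0 <= s <= 1 & x2 = s * (p.2 - r) + (1 - s) * (p.2 + r).
  by apply: segment_comb; [lra | apply/andP; split; lra].
have -> : (t * (p.1 - r) + (1 - t) * (p.1 + r), s * (p.2 - r) + (1 - s) * (p.2 + r)) =
    s *: (t *: corner (-1) (-1) + (1 - t) *: corner 1 (-1)) +
    (1 - s) *: (t *: corner (-1) 1 + (1 - t) *: corner 1 1).
  by apply: ptP; rewrite !ptE /=; ring.
by apply: convex_le_comb => //; apply: convex_le_comb => //;
  rewrite /U !le_max lexx ?orbT.
Qed.

Lemma subgradient_bounded f p : convex_fun f ->
  exists K, forall z c, `|z - p| <= 1 -> subgradient f z c -> `|c| <= K.
Proof.
move=> /[dup] f_conv /convex_funE f_conv'.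
have [U fU] := convex_bounded_above_box p f_conv (ltr0Sn _ 1).
exists (2 * U - 2 * f p) => z c zp c_sub.
have fz : 2 * f p - U <= f z.
  have mid : 2^-1 *: z + (1 - 2^-1) *: (2 *: p - z) = p.
    by apply: ptP; rewrite !ptE /=; field.
  have := f_conv' z (2 *: p - z) 2^-1 ltac:(lra) ltac:(lra); rewrite mid.
  have : f (2 *: p - z) <= U.
    apply: fU; have -> : 2 *: p - z - p = - (z - p) by apply: ptP; rewrite !ptE /=; ring.
    rewrite normrN.
    exact: le_trans zp (ler1n _ 2).
  lra.
have c_le w : `|w| <= 1 -> dotp c w <= 2 * U - 2 * f p.
  move=> w1; have := c_sub w; have : f (z + w) <= U.
    apply: fU; rewrite addrAC; apply: le_trans (ler_normD _ _) _.
    by have := lerD zp w1; lra.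
  lra.
have sg_le k : `|(Num.sg k, 0 : R)| <= 1 /\ `|(0 : R, Num.sg k)| <= 1.
  by rewrite !prod_normE normr0 normr_sg !ge_max ler01 lern1 leq_b1.
rewrite prod_normE ge_max; apply/andP; split.
- by have := c_le _ (sg_le c.1).1; rewrite /dotp /= mulr0 addr0 mulrC -normrEsg.
- by have := c_le _ (sg_le c.2).2; rewrite /dotp /= mulr0 add0r mulrC -normrEsg.
Qed.

Lemma subgradient_monotone f x y cx cy :
  subgradient f x cx -> subgradient f y cy -> 0 <= dotp (cy - cx) (y - x).
Proof.
move=> cx_sub cy_sub; have := cx_sub (y - x); have := cy_sub (x - y).
rewrite !subrKC /dotp !ptE /=; lra.
Qed.

Lemma unit_tangent_S1 M z u : Tan M z `&` S1 = [set u] -> S1 u.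
Proof. by move=> TanS1; have : [set u] u by []; rewrite -TanS1 => -[]. Qed.

Lemma half_unit_shift u s : S1 u -> `|s| <= 1 ->
  enorm (8^-1 *: s - 2^-1 *: u) <= 1 /\ dotp (8^-1 *: s - 2^-1 *: u) u <= 0.
Proof.
move=> Su; have u_sq : u.1 ^+ 2 + u.2 ^+ 2 = 1 := Su.
have := normr_le_enorm u; rewrite (S1E u).1 //.
rewrite !prod_normE !ge_max !ler_norml => /andP[/andP[u1 u1'] /andP[u2 u2']].
move=> /andP[/andP[s1 s1'] /andP[s2 s2']].
have su1 : - 1 <= s.1 * u.1 <= 1 by apply/andP; split; nra.
have su2 : - 1 <= s.2 * u.2 <= 1 by apply/andP; split; nra.
have ss : s.1 ^+ 2 + s.2 ^+ 2 <= 2 by nra.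
move: su1 su2 => /andP[su1 su1'] /andP[su2 su2'].
split; last by rewrite /dotp !ptE /=; lra.
by rewrite -[leRHS]sqrtr1 ler_sqrt // !ptE /=; lra.
Qed.

Section DC_decomposition.
Variables (M : set pt) (g h : pt -> R).
Hypotheses (g_conv : convex_fun g) (dM : forall x, distA M x = g x - h x).

Lemma E_set_subgradient z u c q : M z -> Tan M z `&` S1 = [set u] ->
  subgradient h z c -> enorm q <= 1 -> dotp q u <= 0 -> subgradient g z (c + q).
Proof.
move=> Mz TanS1 c_sub q1 qu w; rewrite leNgt; apply/negP => lt_g.
set eps := (dotp (c + q) w - (g (z + w) - g z)) / 2.
have eps0 : 0 < eps by rewrite divr_gt0 // subr_gt0.
have [t /andP[t0 t1] t_le] := distA_tangent_lower w Mz TanS1 q1 qu eps0.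
have gz : g z = h z by apply/eqP; rewrite -subr_eq0 -dM distA_eq0.
have g_seg : g (z + t *: w) <= t * g (z + w) + (1 - t) * g z.
  have -> : z + t *: w = t *: (z + w) + (1 - t) *: z.
    by apply: ptP; rewrite !ptE /=; ring.
  exact: (convex_funE g).1 g_conv _ _ _ (ltW t0) t1.
have := c_sub (t *: w); rewrite dotpZr => h_le.
rewrite dM in t_le.
have : t * (dotp (c + q) w - eps) <= t * (g (z + w) - g z).
  by rewrite dotpC dotpDr !(dotpC w); lra.
by rewrite ler_pM2l // /eps; lra.
Qed.

Lemma E_set_separated x y ux uy cx cy :
  M x -> Tan M x `&` S1 = [set ux] -> subgradient h x cx ->
  M y -> Tan M y `&` S1 = [set uy] -> subgradient h y cy -> x != y ->
  4^-1 <= `|(cx - 2^-1 *: ux) - (cy - 2^-1 *: uy)|.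
Proof.
move=> Mx Tx cx_sub My Ty cy_sub xy.
set d := _ - _; pose w := y - x; pose s : pt := (Num.sg w.1, Num.sg w.2).
have s1 : `|s| <= 1 by rewrite prod_normE !normr_sg ge_max !lern1 !leq_b1.
have s1' : `|- s| <= 1 by rewrite normrN.
have [qx1 qxu] := half_unit_shift (unit_tangent_S1 Tx) s1.
have [qy1 qyu] := half_unit_shift (unit_tangent_S1 Ty) s1'.
have := subgradient_monotone (E_set_subgradient Mx Tx cx_sub qx1 qxu)
  (E_set_subgradient My Ty cy_sub qy1 qyu).
have -> : cy + (8^-1 *: - s - 2^-1 *: uy) - (cx + (8^-1 *: s - 2^-1 *: ux)) =
    - d - 4^-1 *: s by apply: ptP; rewrite /d !ptE /=; field.
rewrite -/w dotpC dotpBr dotpZr !(dotpC w).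
have -> : dotp s w = `|w.1| + `|w.2| by rewrite /dotp -!normrEsg.
have w_pos : 0 < `|w.1| + `|w.2|.
  rewrite lt_def paddr_eq0 ?normr_ge0 // !normr_eq0 addr_ge0 ?normr_ge0 // andbT.
  have : w != 0 by rewrite subr_eq0 eq_sym.
  by apply: contra => /andP[/eqP w1 /eqP w2]; apply/eqP/ptP.
have := dotp_le_norm (- d) w; rewrite normrN => dw mono.
by rewrite -(ler_pM2r w_pos); lra.
Qed.

End DC_decomposition.

Lemma not_isolated_seq (D : set pt) p :
  ~ (exists U, nbhs p U /\ forall x y, U x -> U y -> D x -> D y -> x = y) ->
  exists z : nat -> pt, [/\ forall n, D (z n), forall n, z n != p,
    forall n, `|z n - p| < n.+1%:R^-1 & z @ \oo --> p].
Proof.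
move=> not_isolated.
have near_pts n : exists z, [/\ D z, z != p & `|z - p| < n.+1%:R^-1].
  apply: contrapT => no_z; apply: not_isolated.
  exists [set x | `|x - p| < n.+1%:R^-1]; split.
    apply/nbhs_ballP; exists n.+1%:R^-1 => /=; first by rewrite invr_gt0 ltr0n.
    by move=> x; rewrite -ball_normE /= distrC.
  move=> x y xp yp Dx Dy; apply: contrapT => /eqP xy.
  have [x_p|x_p] := eqVneq x p.
  - by apply: no_z; exists y; split => //; rewrite -x_p eq_sym.
  - by apply: no_z; exists x.
have [z /all_and3[Dz zp z_near]] := choice near_pts.
exists z; split => //; apply/cvgrPdist_lt => eps eps0.
apply: filterS ((cvgrPdist_lt _ _).1 (@cvg_harmonic R) eps eps0) => n /=.
by rewrite sub0r normrN ger0_norm // distrC; exact: lt_trans (z_near n).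
Qed.

Lemma discrete_set_separated (D : set pt) (e : pt -> pt) (delta : R) : 0 < delta ->
  (forall x y, D x -> D y -> x != y -> delta <= `|e x - e y|) ->
  (forall p, exists K, forall z, D z -> `|z - p| <= 1 -> `|e z| <= K) ->
  discrete_set D.
Proof.
move=> delta0 e_sep e_bnd p; apply: contrapT.
move=> /not_isolated_seq[z [Dz zp z_near z_cvg]].
have [K eK] := e_bnd p.
have ez_bnd n : `|e (z n)| <= K.
  by apply: eK (Dz n) _; rewrite ltW // (lt_le_trans (z_near n)) // invf_le1 ?ler1n ?ltr0n.
have [f [l f_incr ezl]] := bolzano_weierstrass_pt ez_bnd.
have [N _ e_close] := (cvgrPdist_lt _ _).1 ezl _ (divr_gt0 delta0 (ltr0Sn _ 1)).
have zN_pos : 0 < `|z (f N) - p| by rewrite normr_gt0 subr_eq0.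
have [N' _ z_close] := (cvgrPdist_lt _ _).1 (cvg_subseq f_incr z_cvg) _ zN_pos.
have zk : z (f (maxn N N')) != z (f N).
  apply: contraTneq (z_close _ (leq_maxr N N')) => /= ->.
  by rewrite distrC ltxx.
have := e_sep _ _ (Dz _) (Dz _) zk.
have := ler_distD l (e (z (f (maxn N N')))) (e (z (f N))).
rewrite [X in _ <= X + _]distrC.
by have := e_close _ (leq_maxl N N'); have := e_close _ (leqnn N); lra.
Qed.

End Plane.

Theorem proposition5p9 (R : realType) (M : set (pt R)) :
  D2 M -> discrete_set (E_set M).
Proof.
case=> [->|[_ [_ [g [h [g_conv [h_conv dM]]]]]]].
  by move=> p; exists setT; split; [exact: filterT | move=> x y _ _ []].
have unit_tangent z : exists v, E_set M z -> Tan M z `&` @S1 R = [set v].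
  have [[_ [v Tv]]|notE] := pselect (E_set M z); first by exists v.
  by exists z => /notE.
have [u uP] := choice unit_tangent.
have [c cP] := choice (fun z => convex_subgradient z h_conv).
apply: (@discrete_set_separated _ _ (fun z => c z - 2^-1 *: u z) 4^-1) => //.
  move=> x y /[dup] Ex [Mx _] /[dup] Ey [My _].
  by move=> xy; exact: (E_set_separated g_conv dM Mx (uP x Ex) (cP x) My (uP y Ey) (cP y) xy).
move=> p; have [K cK] := subgradient_bounded p h_conv; exists (K + 1) => z Ez zp.
apply: le_trans (ler_normB _ _) (lerD (cK z (c z) zp (cP z)) _).
have u1 : `|u z| <= 1.
  by rewrite -((S1E _).1 (unit_tangent_S1 (uP z Ez))) normr_le_enorm.
by rewrite normrZ ger0_norm //; lra.
Qed.
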